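(* Let $\mathcal F$ be a saturated fusion system over a finite $p$-group $S$, and let $\mathcal E\le\mathcal F$ be a fusion subsystem (not necessarily saturated) over $T\le S$. Let $\mathcal H$ be a nonempty set of subgroups of $T$ closed under $\mathcal E$-conjugacy and under overgroups in $T$, and assume that for all $P\in\mathcal H$: (i) for each $\hat P\le T$ containing $P$ and each $\varphi\in\operatorname{Hom}_{\mathcal F}(\hat P,T)$, if $\varphi|_P\in\operatorname{Hom}_{\mathcal E}(P,T)$ then $\varphi\in\operatorname{Hom}_{\mathcal E}(\hat P,T)$; and (ii) for each $\varphi\in\operatorname{Hom}_{\mathcal F}(N_T(P),S)$ there are $R\le S$ with $R\ge\langle\varphi(N_T(P)),C_S(\varphi(P))\rangle$ and $\psi\in\operatorname{Hom}_{\mathcal F}(R,T)$ such that $\psi\varphi\in\operatorname{Hom}_{\mathcal E}(N_T(P),T)$. Then every $P\in\mathcal H$ that is fully normalized or fully centralized in $\mathcal E$ is receptive and fully centralized in $\mathcal E$ and in $\mathcal F$. If in addition (iii) $\operatorname{Inn}(T)\in\mathrm{Syl}_p(\operatorname{Aut}_{\mathcal E}(T))$, then $\mathcal E$ is $\mathcal H$-saturated.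
   Context: For a fusion system $\mathcal E$ over $R$ (not necessarily saturated) and $P\le R$: $P$ is fully normalized (resp. fully centralized) in $\mathcal E$ if $|N_R(P)|\ge|N_R(Q)|$ (resp. $|C_R(P)|\ge|C_R(Q)|$) for all $\mathcal E$-conjugates $Q$ of $P$; $P$ is fully automized if $\operatorname{Aut}_R(P)\in\mathrm{Syl}_p(\operatorname{Aut}_{\mathcal E}(P))$; $P$ is receptive in $\mathcal E$ if each $\varphi\in\operatorname{Iso}_{\mathcal E}(Q,P)$ extends to a morphism of $\mathcal E$ defined on $N_\varphi=\{x\in N_R(Q)\mid\varphi c_x^Q\varphi^{-1}\in\operatorname{Aut}_R(P)\}$. For a set $\mathcal H$ of subgroups closed under $\mathcal E$-conjugacy, $\mathcal E$ is $\mathcal H$-saturated if each member of $\mathcal H$ is $\mathcal E$-conjugate to a subgroup that is fully automized and receptive in $\mathcal E$. *)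

From mathcomp Require Import all_boot all_fingroup all_solvable.
Set Implicit Arguments. Unset Strict Implicit. Unset Printing Implicit Defensive.
Local Open Scope group_scope.

(* A (candidate) fusion system on a finite group type gT is given by the
   boolean predicate  F P f  meaning "f restricted to P is a morphism of F
   with domain P". *)
Definition fus_pred (gT : finGroupType) := {set gT} -> {ffun gT -> gT} -> bool.

Section Fusion.
Variable gT : finGroupType.
Implicit Types (F E : fus_pred gT) (P Q R S T : {group gT}).

Definition is_fusion_system (S : {group gT}) F : Prop :=
  [/\
      forall (P : {set gT}) (f g : {ffun gT -> gT}),
        {in P, f =1 g} -> F P f = F P g,
      forall (P : {set gT}) f, F P f ->
        [/\ group_set P, P \subset S, f @: P \subset S,
            ({in P &, {morph f : x y / x * y}}) & ({in P &, injective f})],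
      forall P (g : gT), P \subset S -> g \in S -> F P [ffun x => x ^ g],
      forall P Q f, F P f -> Q \subset P -> F Q f &
      ((forall (P : {set gT}) f g, F P f -> F (f @: P) g ->
        F P [ffun x => g (f x)]) /\
      (forall (P : {set gT}) f, F P f ->
        exists g, F (f @: P) g /\ {in P, cancel f g}))].

Definition fusion_subsystem (S T : {group gT}) F E : Prop :=
  [/\ T \subset S, is_fusion_system T E & forall P f, E P f -> F P f].

Definition fhom F (P Q : {set gT}) (f : {ffun gT -> gT}) : bool :=
  F P f && (f @: P \subset Q).

Definition fconj F (P Q : {set gT}) : bool :=
  [exists f : {ffun gT -> gT}, F P f && (f @: P == Q)].

Definition AutF F (P : {set gT}) : {set {perm gT}} :=
  [set a in Aut P | F P [ffun x => a x]].

Definition AutR (R P : {group gT}) : {set {perm gT}} :=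
  conj_aut P @: 'N_R(P).

(* Here R is the group over which F is a fusion system. *)
Definition fully_normalized F R P : Prop :=
  forall Q, fconj F P Q -> #|'N_R(Q)| <= #|'N_R(P)|.

Definition fully_centralized F R P : Prop :=
  forall Q, fconj F P Q -> #|'C_R(Q)| <= #|'C_R(P)|.

Definition fully_automized (p : nat) F R P : bool :=
  p.-Sylow(AutF F P) (AutR R P).

(* N_phi for phi : Q -> P an isomorphism: the x in N_R(Q) such that
   phi c_x phi^{-1} lies in Aut_R(P). *)
Definition Nphi R (Q P : {set gT}) (f : {ffun gT -> gT}) : {set gT} :=
  [set x in 'N_R(Q) |
    [exists y in 'N_R(P), [forall z in Q, f (z ^ x) == f z ^ y]]].

Definition receptive F R P : Prop :=
  forall Q (f : {ffun gT -> gT}), F Q f -> f @: Q = P ->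
    exists g : {ffun gT -> gT}, F (Nphi R Q P f) g /\ {in Q, g =1 f}.

Definition H_saturated (p : nat) F R (H : {set {group gT}}) : Prop :=
  forall P, P \in H ->
    exists Q, [/\ fconj F P Q, fully_automized p F R Q & receptive F R Q].

Definition saturated (p : nat) F S : Prop :=
  H_saturated p F S [set P : {group gT} | P \subset S].

End Fusion.

From mathcomp Require Import all_boot all_fingroup all_solvable.
Set Implicit Arguments. Unset Strict Implicit. Unset Printing Implicit Defensive.
Local Open Scope group_scope.

(* Part 1.  Let P in H be fully normalized or fully centralized in E.
   Saturation of F yields a receptive F-conjugate Q of P and, by a Sylow
   argument (transport_automizer), an isomorphism P -> Q extending to some
   phi on N_S(P).  Hypothesis (ii) brings phi(N_T(P)) back into T through a
   morphism psi with psi phi in E, and the chain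
       |C_S(P)| <= |C_S(Q)| <= |C_T(psi phi P)| <= |C_T(P)| <= |C_S(P)|
   (cent_chain) gives C_T(P) = C_S(P) and |C_S(Q)| <= |C_S(P)|.  Receptivity
   then passes from Q to P in F (receptive_transfer) and from F to E by
   hypothesis (i); full centralization follows since receptive subgroups
   have maximal centralizers in their class (receptive_cent_le).
   Part 2.  Under (iii), fully normalized members of H are fully automized,
   by induction on |T : P|: a p-element of N_{Aut_E(P)}(Aut_T(P)) outside
   Aut_T(P) extends to N_T(P) (norm_ext) and, transported to a fully
   automized conjugate of N_T(P), acts on P by conjugation (norm_ext_conj). *)

Lemma imset_ffun_comp (gT : finGroupType) (A : {set gT}) (f g : {ffun gT -> gT}) :
  [ffun x => g (f x)] @: A = g @: (f @: A).
Proof. by rewrite -imset_comp; apply: eq_imset => x; rewrite ffunE. Qed.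

Lemma imset_cancel (gT : finGroupType) (A : {set gT}) (f g : gT -> gT) :
  {in A, cancel f g} -> g @: (f @: A) = A.
Proof.
move=> fK; rewrite -imset_comp; apply/setP=> x; apply/imsetP/idP.
  by case=> y Ay ->; rewrite /= fK.
by move=> Ax; exists x => //=; rewrite fK.
Qed.

Lemma Aut_im (gT : finGroupType) (P : {group gT}) (a : {perm gT}) :
  a \in Aut P -> a @: P = P.
Proof.
move=> Aa; apply/eqP; rewrite eqEcard card_imset ?leqnn ?andbT; last exact: perm_inj.
by apply/subsetP=> _ /imsetP[x Px ->]; apply: Aut_closed.
Qed.

Lemma Aut_ffun_im (gT : finGroupType) (P : {group gT}) (a : {perm gT}) :
  a \in Aut P -> [ffun x => a x] @: P = P.
Proof.
by move=> Aa; rewrite -[RHS](Aut_im Aa); apply: eq_imset => x; rewrite ffunE.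
Qed.

Lemma conj_eq_cent (gT : finGroupType) (A : {set gT}) (a b : gT) :
  (forall w, w \in A -> w ^ a = w ^ b) -> a * b^-1 \in 'C(A).
Proof.
move=> eq_ab; apply/centP=> w Aw; apply: commute_sym; apply/commgP/conjg_fixP.
by rewrite conjgM eq_ab // -conjgM mulgV conjg1.
Qed.

(* A p-subgroup that is not Sylow is properly contained in a Sylow subgroup,
   hence is normalized by a p-element outside it. *)
Lemma not_Sylow_norm_elt (rT : finGroupType) (p : nat) (G A : {group rT}) :
  A \subset G -> p.-group A -> ~~ p.-Sylow(G) A ->
  exists2 a, a \in 'N_G(A) & (a \notin A) && p.-elt a.
Proof.
move=> sAG pA nsylA; have [D sylD sAD] := Sylow_superset sAG pA.
have pD := pHall_pgroup sylD.
have prAD : A \proper D.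
  by rewrite properEneq sAD andbT; apply: contraNneq nsylA => ->.
have /properP[_ [a /setIP[Da Na] nAa]] :=
  nilpotent_proper_norm (pgroup_nil pD) prAD.
exists a; first by rewrite inE (subsetP (pHall_sub sylD)).
by rewrite nAa (mem_p_elt pD Da).
Qed.

(* If a permutation a agrees on P with the p-element al of Aut(P), then so
   does its p-part a.`_p: restriction to P is a group morphism on the
   stabilizer of P, and it commutes with taking p-parts. *)
Lemma constt_agree (rT : finGroupType) (p : nat) (P : {group rT})
    (a al : {perm rT}) :
  al \in Aut P -> p.-elt al -> {in P, a =1 al} -> {in P, a.`_p =1 al}.
Proof.
move=> Aal pal aal z Pz.
have stab : a \in 'N(P | 'P).
  apply/astabsP=> x; rewrite /= /aperm; apply/idP/idP=> [ax | Px]; last first.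
    by rewrite aal ?(Aut_closed Aal).
  have : a x \in al @: P by rewrite Aut_im.
  by case/imsetP=> y Py; rewrite -aal // => /perm_inj ->.
have ral : restr_perm P a = al.
  apply/permP=> x; case: (boolP (x \in P)) => Px; first by rewrite restr_permE // aal.
  by rewrite (out_perm (restr_perm_on P a)) // (out_Aut Aal).
have stab_p : a.`_p \in 'N(P | 'P) by rewrite /constt groupX.
rewrite -(restr_permE stab_p Pz).
have := morph_constt (restr_perm_morphism P) p stab.
by rewrite /= ral (constt_p_elt pal) => ->.
Qed.

Section FusionBasics.
Variables (gT : finGroupType) (R : {group gT}) (F : fus_pred gT).
Hypothesis FS : is_fusion_system R F.
Implicit Types (P Q X D : {group gT}) (f g h : {ffun gT -> gT}).

Lemma fs_ext (P : {set gT}) f g : F P f -> {in P, f =1 g} -> F P g.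
Proof. by case: FS => ext _ _ _ _ Pf fg; rewrite -(ext _ _ _ fg). Qed.

Lemma fs_props (P : {set gT}) f : F P f ->
  [/\ group_set P, P \subset R, f @: P \subset R,
      {in P &, {morph f : x y / x * y}} & {in P &, injective f}].
Proof. by case: FS => _ props _ _ _; apply: props. Qed.

Lemma fs_group (P : {set gT}) f : F P f -> group_set P.
Proof. by case/fs_props. Qed.

Lemma fs_sub (P : {set gT}) f : F P f -> P \subset R.
Proof. by case/fs_props. Qed.

Lemma fs_imsub (P : {set gT}) f : F P f -> f @: P \subset R.
Proof. by case/fs_props. Qed.

Lemma fs_mem (P : {set gT}) f x : F P f -> x \in P -> f x \in R.
Proof. by move=> Pf Px; apply: (subsetP (fs_imsub Pf)); apply: imset_f. Qed.

Lemma fs_morph (P : {set gT}) f : F P f -> {in P &, {morph f : x y / x * y}}.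
Proof. by case/fs_props. Qed.

Lemma fs_inj (P : {set gT}) f : F P f -> {in P &, injective f}.
Proof. by case/fs_props. Qed.

Lemma fs_card (P : {set gT}) f : F P f -> #|f @: P| = #|P|.
Proof. by move/fs_inj/card_in_imset. Qed.

Lemma fs_conj P (a : gT) : P \subset R -> a \in R -> F P [ffun x => x ^ a].
Proof. by case: FS => _ _ conj _ _; apply: conj. Qed.

Lemma fs_id P : P \subset R -> F P [ffun x => x].
Proof.
move=> sPR; apply: fs_ext (fs_conj sPR (group1 R)) _ => x _.
by rewrite !ffunE conjg1.
Qed.

Lemma fs_restr P Q f : F P f -> Q \subset P -> F Q f.
Proof. by case: FS => _ _ _ restr _; apply: restr. Qed.

Lemma fs_comp (P : {set gT}) f g : F P f -> F (f @: P) g ->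
  F P [ffun x => g (f x)].
Proof. by case: FS => _ _ _ _ [comp _]; apply: comp. Qed.

Lemma fs_inv (P : {set gT}) f : F P f ->
  exists g, F (f @: P) g /\ {in P, cancel f g}.
Proof. by case: FS => _ _ _ _ [_ inv]; apply: inv. Qed.

Lemma fs_imgroup (P : {set gT}) f : F P f -> group_set (f @: P).
Proof. by move/fs_inv=> [g [/fs_group]]. Qed.

Definition fmorph P f (Pf : F P f) : {morphism P >-> gT} :=
  @Morphism _ _ P f (fs_morph Pf).

Lemma fs_conjg P f x y : F P f -> x \in P -> y \in P -> f (x ^ y) = f x ^ f y.
Proof. by move=> Pf Px Py; apply: (morphJ (fmorph Pf)). Qed.

Lemma fs_cent_im D h (A C : {set gT}) : F D h -> A \subset D -> C \subset D ->
  C \subset 'C(A) -> h @: C \subset 'C(h @: A).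
Proof.
move=> Dh sAD sCD cCA; apply/subsetP=> _ /imsetP[c Cc ->].
apply/centP=> _ /imsetP[a Aa ->].
have Dc := subsetP sCD c Cc; have Da := subsetP sAD a Aa.
rewrite /commute -!(fs_morph Dh) //.
by have /centP/(_ a Aa) := subsetP cCA c Cc => ->.
Qed.

Lemma fs_cent_card (U : {set gT}) D h (A C : {set gT}) : F D h ->
  A \subset D -> C \subset D -> C \subset 'C(A) -> h @: C \subset U ->
  #|C| <= #|'C_U(h @: A)|.
Proof.
move=> Dh sAD sCD cCA sCU.
rewrite -(card_in_imset (sub_in2 (subsetP sCD) (fs_inj Dh))).
by apply: subset_leq_card; rewrite subsetI sCU (fs_cent_im Dh).
Qed.

Lemma fs_norm_im D h (A : {set gT}) y : F D h -> A \subset D -> y \in D ->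
  y \in 'N(A) -> h y \in 'N(h @: A).
Proof.
move=> Dh sAD Dy nAy; rewrite inE; apply/subsetP=> _ /imsetP[_ /imsetP[a Aa ->] ->].
rewrite -(fs_conjg Dh) ?(subsetP sAD a Aa) //; apply: imset_f.
by rewrite memJ_norm.
Qed.

End FusionBasics.

Section Conjugacy.
Variables (gT : finGroupType) (R : {group gT}) (F : fus_pred gT).
Hypothesis FS : is_fusion_system R F.
Implicit Types (P Q X N : {group gT}) (f g : {ffun gT -> gT}).

Lemma fconjP (P Q : {set gT}) :
  reflect (exists f, F P f /\ f @: P = Q) (fconj F P Q).
Proof.
apply: (iffP existsP) => [[f /andP[Pf /eqP e]]|[f [Pf e]]]; exists f => //.
by rewrite Pf e eqxx.
Qed.

Lemma fconj_refl P : P \subset R -> fconj F P P.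
Proof.
move=> sPR; apply/fconjP; exists [ffun x => x]; split; first exact: (fs_id FS).
by rewrite -{2}(imset_id P); apply: eq_imset => x; rewrite ffunE.
Qed.

Lemma fconj_sym P Q : fconj F P Q -> fconj F Q P.
Proof.
case/fconjP=> f [Pf <-]; have [g [Qg gK]] := fs_inv FS Pf.
by apply/fconjP; exists g; split=> //; apply: imset_cancel.
Qed.

Lemma fconj_trans (P Q U : {set gT}) : fconj F P Q -> fconj F Q U -> fconj F P U.
Proof.
case/fconjP=> f [Pf eQ]; case/fconjP=> g [Qg eU].
apply/fconjP; exists [ffun x => g (f x)]; rewrite imset_ffun_comp eQ.
by split=> //; apply: (fs_comp FS Pf); rewrite eQ.
Qed.

Lemma fully_normalized_conj X : X \subset R ->
  exists2 Y : {group gT}, fconj F X Y & fully_normalized F R Y.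
Proof.
move=> sXR.
have [Y cXY maxY] := @arg_maxnP _ X (fun Y : {group gT} => fconj F X Y)
  (fun Y : {group gT} => #|'N_R(Y)|) (fconj_refl sXR).
by exists Y => // Z cYZ; apply: maxY (fconj_trans cXY cYZ).
Qed.

Lemma AutF_group_set P : P \subset R -> group_set (AutF F P).
Proof.
move=> sPR; apply/group_setP; split.
  apply/setIdP; split; first exact: group1.
  by apply: (fs_ext FS) (fs_id FS sPR) _ => x _; rewrite !ffunE perm1.
move=> a b /setIdP[Aa Fa] /setIdP[Ab Fb]; apply/setIdP; split; first exact: groupM.
have := fs_comp FS Fa; rewrite Aut_ffun_im // => /(_ _ Fb) Fab.
by apply: (fs_ext FS) Fab _ => x _; rewrite !ffunE permM.
Qed.

Lemma AutR_morphim (U : {group gT}) P : AutR U P = conj_aut P @* 'N_U(P).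
Proof. by rewrite morphimEsub // subsetIr. Qed.

Lemma AutR_sub (U : {group gT}) P : U \subset R -> P \subset R ->
  AutR U P \subset AutF F P.
Proof.
move=> sUR sPR; apply/subsetP=> _ /imsetP[x /setIP[Ux Nx] ->].
apply/setIdP; split; first exact: Aut_aut.
apply: (fs_ext FS) (fs_conj FS sPR (subsetP sUR x Ux)) _ => y Py.
by rewrite !ffunE norm_conj_autE.
Qed.

Lemma NphiP (U : {group gT}) (Q P : {set gT}) f x :
  reflect (x \in 'N_U(Q) /\ exists2 y, y \in 'N_U(P) &
             forall z, z \in Q -> f (z ^ x) = f z ^ y)
    (x \in Nphi U Q P f).
Proof.
apply: (iffP setIdP) => [[Nx /existsP[y /andP[Ny /forallP fJ]]]|[Nx [y Ny fJ]]].
  by split=> //; exists y => // z Qz; have /implyP/(_ Qz)/eqP := fJ z.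
split=> //; apply/existsP; exists y; rewrite Ny; apply/forallP => z.
by apply/implyP=> Qz; rewrite fJ.
Qed.

Lemma Nphi_group_set (U : {group gT}) Q P f : group_set (Nphi U Q P f).
Proof.
apply/group_setP; split.
  by apply/NphiP; split; [exact: group1 | exists 1 => // z _; rewrite !conjg1].
move=> x1 x2 /NphiP[N1 [y1 Ny1 fJ1]] /NphiP[N2 [y2 Ny2 fJ2]].
apply/NphiP; split; first exact: groupM.
exists (y1 * y2); first exact: groupM.
move=> z Qz; rewrite conjgM fJ2; last by rewrite memJ_norm //; case/setIP: N1.
by rewrite fJ1 // conjgM.
Qed.

Canonical Nphi_group (U : {group gT}) Q P f := Group (Nphi_group_set U Q P f).

Lemma Nphi_cent (U : {group gT}) Q P f : Q \subset U -> 'C_U(Q) \subset Nphi U Q P f.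
Proof.
move=> sQU; apply/subsetP=> x /setIP[Ux Cx]; apply/NphiP; split.
  by rewrite inE Ux (subsetP (cent_sub Q)).
exists 1 => [|z Qz]; first exact: group1.
by rewrite conjg1 /conjg -(centP Cx z Qz) mulKg.
Qed.

Lemma AutR_Nphi (U P Q : {group gT}) f :
  (forall b, b \in AutR U P -> exists2 y, y \in 'N_U(Q) &
     forall z, z \in P -> f (b z) = f z ^ y) ->
  'N_U(P) \subset Nphi U P Q f.
Proof.
move=> fJ; apply/subsetP=> x NUx; apply/NphiP; split=> //.
have Nx : x \in 'N(P) by case/setIP: NUx.
have [y Ny fJy] := fJ (conj_aut P x) (imset_f _ NUx).
by exists y => // z Pz; rewrite -fJy ?norm_conj_autE.
Qed.

Lemma Nphi_self X Q f : F X f -> f @: X = Q -> X \subset Nphi R X Q f.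
Proof.
move=> Xf eQ; apply/subsetP=> x Xx; apply/NphiP; split.
  by rewrite inE (subsetP (fs_sub FS Xf)) // (subsetP (normG X)).
exists (f x) => [|z Xz]; last by rewrite (fs_conjg FS Xf).
by rewrite inE (fs_mem FS Xf) // (subsetP (normG Q)) // -eQ imset_f.
Qed.

Lemma receptive_cent_le X Q f : receptive F R Q -> F X f -> f @: X = Q ->
  #|'C_R(X)| <= #|'C_R(Q)|.
Proof.
move=> rQ Xf eQ; have [g [Mg gf]] := rQ X f Xf eQ.
have sCN : 'C_R(X) \subset Nphi R X Q f by apply: Nphi_cent; exact: (fs_sub FS Xf).
rewrite -eQ -(eq_in_imset gf); apply: (fs_cent_card FS (D := Nphi_group R X Q f) Mg).
- exact: Nphi_self.
- exact: sCN.
- exact: subsetIr.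
by apply/subsetP=> _ /imsetP[c Cc ->]; apply: (fs_mem FS Mg (subsetP sCN c Cc)).
Qed.

Lemma fs_stable_Aut N f : F N f -> f @: N \subset N ->
  exists2 a, a \in AutF F N & {in N, a =1 f}.
Proof.
move=> Nf fN; have injf := fs_inj FS Nf.
have aE : {in N, perm_in injf fN =1 f} := perm_inE injf fN.
exists (perm_in injf fN) => //; apply/setIdP; split.
  rewrite inE perm_in_on /=; apply/morphicP=> x y Nx Ny.
  by rewrite !aE ?groupM // (fs_morph FS Nf).
by apply: (fs_ext FS Nf) => x Nx; rewrite ffunE aE.
Qed.

End Conjugacy.

(* If Y is fully automized, any p-subgroup B of Aut_F(X) can be
   conjugated, by post-composing an isomorphism X -> Y with an automorphism
   of Y, into the automorphisms of Y induced by N_R(Y). *)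
Section Transport.
Variables (gT : finGroupType) (R : {group gT}) (F : fus_pred gT) (p : nat).
Hypothesis FS : is_fusion_system R F.
Implicit Types (X Y : {group gT}) (f : {ffun gT -> gT}).

Lemma AutF_isom X Y f (Xf : F X f) (injf : 'injm (fmorph FS Xf)) b :
  f @: X = Y -> b \in AutF F X -> Aut_isom injf (subxx X) b \in AutF F Y.
Proof.
move=> eY /setIdP[Ab Fb]; apply/setIdP; split.
  have mX : fmorph FS Xf @* X = Y by rewrite morphimEdom.
  by rewrite -mX; apply: Aut_Aut_isom.
have [psi [Ypsi psiK]] := fs_inv FS Xf.
have psiY : psi @: (f @: X) = X by apply: imset_cancel.
have F1 : F (f @: X) [ffun y => [ffun x => b x] (psi y)].
  by apply: (fs_comp FS Ypsi); rewrite psiY.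
have e1 : [ffun y => [ffun x => b x] (psi y)] @: (f @: X) = X.
  by rewrite imset_ffun_comp psiY Aut_ffun_im.
have := fs_comp FS F1; rewrite e1 => /(_ _ Xf) F2.
rewrite -eY; apply: (fs_ext FS F2) => _ /imsetP[x Xx ->].
by rewrite !ffunE psiK // (Aut_isomE injf (subxx X) Ab Xx).
Qed.

Lemma transport_automizer X Y f (B : {group {perm gT}}) :
  F X f -> f @: X = Y -> fully_automized p F R Y ->
  B \subset AutF F X -> p.-group B ->
  exists f', [/\ F X f', f' @: X = Y &
    forall b, b \in B -> exists2 y, y \in 'N_R(Y) &
      forall z, z \in X -> f' (b z) = f' z ^ y].
Proof.
move=> Xf eY faY sBA pB.
have sYR : Y \subset R by rewrite -eY; exact: (fs_imsub FS Xf).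
have injf : 'injm (fmorph FS Xf) by apply/injmP; exact: (fs_inj FS Xf).
pose af := Aut_isom injf (subxx X).
have sBAut : B \subset Aut X.
  by apply: subset_trans sBA _; apply/subsetP=> a /setIdP[].
have sB'A : af @* B \subset AutF F Y.
  by apply/subsetP=> _ /morphimP[b _ Bb ->]; apply: AutF_isom (subsetP sBA b Bb).
have sylY : p.-Sylow(Group (AutF_group_set FS sYR)) (conj_aut Y @* 'N_R(Y))%G.
  by move: faY; rewrite /fully_automized AutR_morphim.
have [a Aa sJ] := Sylow_Jsub sylY sB'A (morphim_pgroup _ pB).
have /setIdP[AutYa Fa] : a \in AutF F Y by [].
exists [ffun x => a (f x)]; split.
- have := fs_comp FS Xf; rewrite eY => /(_ _ Fa) F3.
  by apply: (fs_ext FS F3) => x _; rewrite !ffunE.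
- by rewrite -[RHS](Aut_im AutYa) -eY -imset_comp; apply: eq_imset => x; rewrite ffunE.
move=> b Bb; have Ab := subsetP sBAut b Bb.
have : af b ^ a \in conj_aut Y @* 'N_R(Y).
  by apply: (subsetP sJ); rewrite memJ_conjg mem_morphim.
case/morphimP=> y Ny NRy eb; exists y => // z Xz.
have fzY : f z \in Y by rewrite -eY imset_f.
rewrite !ffunE -(@norm_conj_autE _ Y y (a (f z))) ?(Aut_closed AutYa) //.
by rewrite -eb conjgE !permM permK (Aut_isomE injf (subxx X) Ab Xz).
Qed.

End Transport.

(* Receptivity passes from a subgroup Q to an F-conjugate P, provided the
   isomorphism P -> Q extends to some phi on N_S(P) mapping C_S(P) onto
   C_S(Q): an extension of phi chi is corrected by the inverse of phi. *)
Section ReceptiveTransfer.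
Variables (gT : finGroupType) (S : {group gT}) (F : fus_pred gT).
Hypothesis FS : is_fusion_system S F.
Implicit Types (P Q X D : {group gT}) (f g chi : {ffun gT -> gT}).

Lemma ext_conj_cent D g chi X (P : {set gT}) x y : F D g -> X \subset D ->
  x \in D -> x \in 'N(X) -> {in X, g =1 chi} -> chi @: X = P ->
  (forall z, z \in X -> chi (z ^ x) = chi z ^ y) -> g x * y^-1 \in 'C(P).
Proof.
move=> Dg sXD Dx nXx gchi <- chiJ; apply: conj_eq_cent => _ /imsetP[z Xz ->].
have Dz := subsetP sXD z Xz; have Xzx : z ^ x \in X by rewrite memJ_norm.
by rewrite -chiJ // -!gchi // (fs_conjg FS Dg).
Qed.

Lemma fs_cent_im_eq D phi P : F D phi -> P \subset D -> 'C_S(P) \subset D ->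
  #|'C_S(phi @: P)| <= #|'C_S(P)| -> phi @: 'C_S(P) = 'C_S(phi @: P).
Proof.
move=> Dphi sPD sCD leC; apply/eqP.
rewrite eqEcard (card_in_imset (sub_in2 (subsetP sCD) (fs_inj FS Dphi))) leC andbT.
rewrite subsetI (fs_cent_im FS Dphi sPD sCD) ?subsetIr // andbT.
by apply: subset_trans (imsetS _ sCD) (fs_imsub FS Dphi).
Qed.

Section Transfer.
Variables (P Q : {group gT}) (phi : {ffun gT -> gT}).
Hypotheses (sPS : P \subset S) (Nphi_phi : F 'N_S(P) phi) (ePQ : phi @: P = Q).

Let sPN : P \subset 'N_S(P). Proof. by rewrite subsetI sPS normG. Qed.
Let sCN : 'C_S(P) \subset 'N_S(P). Proof. by apply: setIS; apply: cent_sub. Qed.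

Lemma fs_comp_phi X chi : F X chi -> chi @: X = P ->
  F X [ffun x => phi (chi x)] /\ [ffun x => phi (chi x)] @: X = Q.
Proof.
move=> Xchi echi; rewrite imset_ffun_comp echi; split=> //.
by apply: (fs_comp FS Xchi); rewrite echi; exact: (fs_restr FS Nphi_phi sPN).
Qed.

Lemma fs_norm_im_norm y : y \in 'N_S(P) -> phi y \in 'N_S(Q).
Proof.
move=> Ny; rewrite inE (fs_mem FS Nphi_phi Ny) -ePQ /=.
by apply: (fs_norm_im FS Nphi_phi) => //; case/setIP: Ny.
Qed.

Lemma Nphi_comp X chi : F X chi -> chi @: X = P ->
  {in Nphi S X P chi, forall x, exists2 y, y \in 'N_S(P) & forall z, z \in X ->
     [ffun x => phi (chi x)] (z ^ x) = [ffun x => phi (chi x)] z ^ phi y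
     /\ chi (z ^ x) = chi z ^ y}.
Proof.
move=> Xchi echi x /NphiP[Nx [y Ny chiJ]]; exists y => // z Xz.
have chiP : chi z \in P by rewrite -echi imset_f.
by rewrite !ffunE chiJ // (fs_conjg FS Nphi_phi) // (subsetP sPN).
Qed.

Hypothesis eC : phi @: 'C_S(P) = 'C_S(Q).

(* N_chi lies in the extension controller of phi chi, and an extension th of
   phi chi maps N_chi into phi(N_S(P)): th x and phi y induce the same map
   on Q, so they differ by an element of C_S(Q) = phi(C_S(P)). *)
Lemma Nphi_ext_im X chi th : F X chi -> chi @: X = P ->
  F (Nphi S X Q [ffun x => phi (chi x)]) th ->
  {in X, th =1 [ffun x => phi (chi x)]} ->
  Nphi S X P chi \subset Nphi S X Q [ffun x => phi (chi x)] /\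
  th @: Nphi S X P chi \subset phi @: 'N_S(P).
Proof.
move=> Xchi echi; set om := [ffun x => phi (chi x)] => Mth thom.
have [Xom eom] := fs_comp_phi Xchi echi.
have sMM : Nphi S X P chi \subset Nphi S X Q om.
  apply/subsetP=> x Mx; apply/NphiP; split; first by case/NphiP: Mx.
  have [y Ny omJ] := Nphi_comp Xchi echi Mx; exists (phi y).
    exact: fs_norm_im_norm.
  by move=> z Xz; case: (omJ z Xz).
split=> //; apply/subsetP=> _ /imsetP[x Mx ->].
have [y Ny omJ] := Nphi_comp Xchi echi Mx.
have NXx : x \in 'N(X) by case/NphiP: Mx => /setIP[].
have sXM := Nphi_self FS Xom eom.
have cc : th x * (phi y)^-1 \in 'C(Q).
  apply: (ext_conj_cent Mth sXM (subsetP sMM x Mx) NXx thom eom).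
  by move=> z Xz; case: (omJ z Xz).
have : th x * (phi y)^-1 \in 'C_S(Q).
  rewrite inE cc andbT groupM ?groupV ?(fs_mem FS Mth (subsetP sMM x Mx)) //.
  by case/setIP: (fs_norm_im_norm Ny).
rewrite -eC => /imsetP[c /(subsetP sCN) Nc ec]; apply/imsetP; exists (c * y).
  exact: groupM.
by rewrite (fs_morph FS Nphi_phi Nc Ny) -ec mulgKV.
Qed.

Lemma receptive_transfer : receptive F S Q -> receptive F S P.
Proof.
move=> rQ X chi Xchi echi; set om := [ffun x => phi (chi x)].
have [Xom eom] := fs_comp_phi Xchi echi.
have [th [Mth thom]] := rQ X om Xom eom.
have [sMM sthM] := Nphi_ext_im Xchi echi Mth thom.
have Mth' : F (Nphi S X P chi) th := fs_restr FS (P := Nphi_group S X Q om) Mth sMM.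
have [io [Iio ioK]] := fs_inv FS Nphi_phi.
have Iio' := fs_restr FS (P := Group (fs_imgroup FS Nphi_phi))
  (Q := Group (fs_imgroup FS Mth')) Iio sthM.
exists [ffun x => io (th x)]; split; first exact: (fs_comp FS Mth' Iio').
move=> z Xz; rewrite ffunE thom // ffunE ioK //.
by apply: (subsetP sPN); rewrite -echi imset_f.
Qed.

End Transfer.
End ReceptiveTransfer.

(* For P fully normalized, a morphism defined on N_T(P) maps it onto the
   normalizer of the image of P; hence it does not enlarge centralizers. *)
Section FullyNormalized.
Variables (gT : finGroupType) (T : {group gT}) (E : fus_pred gT).
Hypothesis ES : is_fusion_system T E.
Variables (P : {group gT}) (h : {ffun gT -> gT}).
Hypotheses (sPT : P \subset T) (Eh : E 'N_T(P) h).

Let sPN : P \subset 'N_T(P). Proof. by rewrite subsetI sPT normG. Qed.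
Let EhP : E P h. Proof. exact: (fs_restr ES (P := 'N_T(P)%G) Eh sPN). Qed.

Lemma fconj_im : fconj E P (h @: P).
Proof. by apply/fconjP; exists h. Qed.

Lemma fully_normalized_norm_im : fully_normalized E T P ->
  h @: 'N_T(P) = 'N_T(h @: P).
Proof.
move=> fnP; apply/eqP; rewrite eqEcard (fs_card ES Eh).
rewrite (fnP (Group (fs_imgroup ES EhP)) fconj_im) andbT.
apply/subsetP=> _ /imsetP[y Ny ->]; rewrite inE (fs_mem ES Eh Ny) /=.
by apply: (fs_norm_im ES Eh) => //; case/setIP: Ny.
Qed.

Lemma fully_normalized_cent_le : fully_normalized E T P ->
  #|'C_T(h @: P)| <= #|'C_T(P)|.
Proof.
move=> fnP; have sC : 'C_T(h @: P) \subset h @: 'C_T(P).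
  apply/subsetP=> w Cw.
  have : w \in 'N_T(h @: P) by apply: (subsetP (setIS T (cent_sub _))).
  rewrite -(fully_normalized_norm_im fnP) => /imsetP[n /setIP[Tn Nn] ew].
  apply/imsetP; exists n => //; rewrite inE Tn /=.
  have NTn : n \in 'N_T(P) by rewrite inE Tn.
  apply/centP=> z Pz; have NTz := subsetP sPN z Pz.
  apply: (fs_inj ES Eh); rewrite ?groupM // !(fs_morph ES Eh) //.
  have /centP/(_ (h z)) := subsetP (subsetIr T _) w Cw.
  by rewrite -ew; apply; rewrite imset_f.
exact: leq_trans (subset_leq_card sC) (leq_imset_card _ _).
Qed.

Lemma fn_or_fc_cent_le :
  fully_normalized E T P \/ fully_centralized E T P ->
  #|'C_T(h @: P)| <= #|'C_T(P)|.
Proof.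
case=> [/fully_normalized_cent_le // | fcP].
exact: (fcP (Group (fs_imgroup ES EhP)) fconj_im).
Qed.

End FullyNormalized.

(* Transported to a fully automized conjugate N' of N_T(P), a p-element of
   Aut_E(N_T(P)) stabilizing a fully normalized P becomes conjugation by an
   element of N' = N_T(chi P); pulled back, it acts on P as conjugation by an
   element of N_T(P). *)
Lemma norm_ext_conj (gT : finGroupType) (p : nat) (T : {group gT})
    (E : fus_pred gT) (P N' : {group gT}) (be : {perm gT}) :
  is_fusion_system T E -> P \subset T -> fully_normalized E T P ->
  fconj E 'N_T(P) N' -> fully_automized p E T N' ->
  be \in AutF E 'N_T(P) -> p.-elt be -> be @: P \subset P ->
  exists2 n0, n0 \in 'N_T(P) & {in P, forall z, be z = z ^ n0}.
Proof.
move=> ES sPT fnP /fconjP[chi0 [Nchi0 echi0]] faN' EBbe pbe beP.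
have sPN : P \subset 'N_T(P) by rewrite subsetI sPT normG.
have sB : <[be]> \subset AutF E 'N_T(P).
  by rewrite (cycle_subG _ (Group (AutF_group_set ES (subsetIl T _)))).
have [chi [Nchi echi chiJ]] :=
  transport_automizer ES Nchi0 echi0 faN' sB pbe.
have [y NTy chi_be] := chiJ be (cycle_id be).
have eN' : N' = 'N_T(chi @: P) :> {set gT}.
  by rewrite -echi (fully_normalized_norm_im ES sPT Nchi fnP).
have : y \in N'.
  rewrite eN' inE; case/setIP: NTy => -> _ /=.
  rewrite inE; apply/subsetP=> _ /imsetP[_ /imsetP[z Pz ->] ->].
  by rewrite -chi_be ?(subsetP sPN) // imset_f // (subsetP beP) // imset_f.
rewrite -echi => /imsetP[n0 Nn0 ey]; exists n0 => // z Pz.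
have Nz := subsetP sPN z Pz; have Nbz := subsetP sPN _ (subsetP beP _ (imset_f be Pz)).
apply: (fs_inj ES Nchi) => //; first by rewrite groupJ.
by rewrite chi_be // ey (fs_conjg ES Nchi).
Qed.

Lemma saturated_receptive_ext (gT : finGroupType) (p : nat) (S : {group gT})
    (F : fus_pred gT) (P : {group gT}) :
  p.-group S -> is_fusion_system S F -> saturated p F S -> P \subset S ->
  exists (Q : {group gT}) (phi : {ffun gT -> gT}),
    [/\ F 'N_S(P) phi, phi @: P = Q & receptive F S Q].
Proof.
move=> pS FS satF sPS.
have [Q [cPQ faQ rQ]] : exists Q : {group gT},
    [/\ fconj F P Q, fully_automized p F S Q & receptive F S Q].
  by apply: satF; rewrite inE.
case/fconjP: cPQ => f0 [Pf0 e0].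
have sB : (conj_aut P @* 'N_S(P))%G \subset AutF F P.
  by rewrite /= -AutR_morphim; apply: (AutR_sub FS (subxx S) sPS).
have pB : p.-group (conj_aut P @* 'N_S(P))%G.
  by apply: morphim_pgroup; apply: pgroupS pS; apply: subsetIl.
have [f [Pf ef fJ]] := transport_automizer FS Pf0 e0 faQ sB pB.
have sN : 'N_S(P) \subset Nphi S P Q f.
  by apply: AutR_Nphi => b; rewrite AutR_morphim; apply: fJ.
have [g [Mg gf]] := rQ P f Pf ef.
exists Q, g; split=> //; first exact: (fs_restr FS (P := Nphi_group S P Q f)).
by rewrite (eq_in_imset gf).
Qed.

Section Lemma1p10.
Variables (gT : finGroupType) (p : nat) (S T : {group gT}) (F E : fus_pred gT)
  (H : {set {group gT}}).
Hypotheses (pS : p.-group S) (FS : is_fusion_system S F) (satF : saturated p F S)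
  (sTS : T \subset S) (ES : is_fusion_system T E)
  (EF : forall (P : {group gT}) f, E P f -> F P f)
  (HT : forall P : {group gT}, P \in H -> P \subset T)
  (Hconj : forall P Q : {group gT}, P \in H -> fconj E P Q -> Q \in H)
  (Hi : forall P : {group gT}, P \in H ->
     forall (Phat : {group gT}) (f : {ffun gT -> gT}),
       P \subset Phat -> Phat \subset T ->
       fhom F Phat T f -> fhom E P T f -> fhom E Phat T f)
  (Hii : forall P : {group gT}, P \in H ->
     forall f : {ffun gT -> gT}, fhom F 'N_T(P) S f ->
       exists R : {group gT},
         [/\ R \subset S, <<(f @: 'N_T(P)) :|: 'C_S(f @: P)>> \subset R &
             exists g : {ffun gT -> gT},
               fhom F R T g /\ fhom E 'N_T(P) T [ffun x => g (f x)]]).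

Section FullyNormalizedOrCentralized.
Variable P : {group gT}.
Hypotheses (HP : P \in H)
  (fnc : fully_normalized E T P \/ fully_centralized E T P).

Let sPT : P \subset T. Proof. exact: HT. Qed.
Let sPS : P \subset S. Proof. exact: subset_trans sPT sTS. Qed.
Let sPNS : P \subset 'N_S(P). Proof. by rewrite subsetI sPS normG. Qed.

(* The central inequality chain
     |C_S(P)| <= |C_S(Q)| <= |C_T(psi phi P)| <= |C_T(P)| <= |C_S(P)|,
   where phi : N_S(P) -> S comes from saturation of F and psi from (ii). *)
Lemma cent_chain : exists (Q : {group gT}) (phi : {ffun gT -> gT}),
  [/\ F 'N_S(P) phi, phi @: P = Q, receptive F S Q,
      #|'C_S(Q)| <= #|'C_S(P)| & 'C_T(P) = 'C_S(P)].
Proof.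
have [Q [phi [Nphi eQ rQ]]] := saturated_receptive_ext pS FS satF sPS.
have sCN : 'C_S(P) \subset 'N_S(P) by apply: setIS; apply: cent_sub.
have NTphi : fhom F 'N_T(P) S phi.
  have NTphi := fs_restr FS Nphi (setSI _ sTS).
  by rewrite /fhom NTphi (fs_imsub FS NTphi).
have [R [_ sgen [g [/andP[Rg gR] /andP[Eh _]]]]] := Hii HP NTphi.
have sUR := subset_trans (sub_gen (subxx _)) sgen.
have sQR : Q \subset R.
  rewrite -eQ; apply: subset_trans (subset_trans (subsetUl _ _) sUR).
  by apply: imsetS; rewrite subsetI sPT normG.
have sCR : 'C_S(Q) \subset R by rewrite -eQ; exact: subset_trans (subsetUr _ _) sUR.
have c1 : #|'C_S(P)| <= #|'C_S(Q)|.
  rewrite -eQ; apply: (fs_cent_card FS Nphi) => //; first exact: subsetIr.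
  exact: subset_trans (imsetS _ sCN) (fs_imsub FS Nphi).
have c2 : #|'C_S(Q)| <= #|'C_T([ffun x => g (phi x)] @: P)|.
  rewrite imset_ffun_comp eQ; apply: (fs_cent_card FS Rg) => //.
    exact: subsetIr.
  exact: subset_trans (imsetS _ sCR) gR.
have c3 := fn_or_fc_cent_le ES sPT Eh fnc.
have c4 : #|'C_T(P)| <= #|'C_S(P)| by apply: subset_leq_card; apply: setSI.
have leSQP : #|'C_S(Q)| <= #|'C_T(P)| := leq_trans c2 c3.
exists Q, phi; split=> //; first exact: leq_trans leSQP c4.
apply/eqP; rewrite eqEcard setSI //=.
exact: leq_trans c1 leSQP.
Qed.

(* Receptivity of Q transfers to P, since |C_S(Q)| <= |C_S(P)|. *)
Lemma receptive_F : receptive F S P.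
Proof.
have [Q [phi [Nphi eQ rQ leC _]]] := cent_chain.
apply: (receptive_transfer FS sPS Nphi eQ) => //.
rewrite -eQ; apply: (fs_cent_im_eq FS Nphi sPNS); first by apply: setIS; apply: cent_sub.
by rewrite eQ.
Qed.

(* Every F-conjugate of P maps onto the receptive Q, whose centralizer in S
   is no larger than that of P. *)
Lemma fully_centralized_F : fully_centralized F S P.
Proof.
have [Q [phi [Nphi eQ rQ leC _]]] := cent_chain.
move=> Q0 cPQ0.
have cPQ : fconj F P Q.
  by apply/fconjP; exists phi; split=> //; exact: (fs_restr FS (P := 'N_S(P)%G) Nphi sPNS).
have /fconjP[chi [Xchi echi]] := fconj_trans FS (fconj_sym FS cPQ0) cPQ.
exact: leq_trans (receptive_cent_le FS rQ Xchi echi) leC.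
Qed.

(* Full centralization in E follows from that in F, as C_T(P) = C_S(P). *)
Lemma fully_centralized_E : fully_centralized E T P.
Proof.
have [_ [_ [_ _ _ _ eCT]]] := cent_chain.
move=> Q0 /fconjP[f [Pf eQ0]]; rewrite eCT.
have cPQ0 : fconj F P Q0 by apply/fconjP; exists f; split=> //; apply: EF.
exact: leq_trans (subset_leq_card (setSI _ sTS)) (fully_centralized_F cPQ0).
Qed.

Let sNphiTS X chi : Nphi T X P chi \subset Nphi S X P chi.
Proof.
apply/subsetP=> x /NphiP[Nx [t Nt chiJ]]; apply/NphiP.
by split; [|exists t => //]; apply: (subsetP (setSI _ sTS)).
Qed.

(* Since C_T(P) = C_S(P), an extension of chi : X -> P to N_chi in S maps
   the part of N_chi lying in T back into T. *)
Lemma Nphi_ext_in_T (X : {group gT}) chi g : F X chi -> chi @: X = P ->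
  F (Nphi S X P chi) g -> {in X, g =1 chi} -> g @: Nphi T X P chi \subset T.
Proof.
move=> Xchi echi Mg gchi; have [_ [_ [_ _ _ _ eCT]]] := cent_chain.
have sXM := Nphi_self FS Xchi echi.
apply/subsetP=> _ /imsetP[x MTx ->].
have Mx : x \in Nphi S X P chi := subsetP (sNphiTS X chi) x MTx.
case/NphiP: MTx => /setIP[Tx NXx] [t /setIP[Tt _] chiJ].
have : g x * t^-1 \in 'C_S(P).
  rewrite inE (ext_conj_cent FS Mg sXM Mx NXx gchi echi chiJ) andbT.
  by rewrite groupM ?groupV ?(fs_mem FS Mg Mx) ?(subsetP sTS).
by rewrite -eCT => /setIP[cT _]; rewrite -(mulgKV t (g x)) groupM.
Qed.

(* Hypothesis (i) upgrades the F-extension of receptive_F to an E-morphism. *)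
Lemma receptive_E : receptive E T P.
Proof.
move=> X chi Xchi echi.
have [g [Mg gchi]] := receptive_F (EF Xchi) echi.
have MEg := fs_restr FS (P := Nphi_group S X P chi) Mg (sNphiTS X chi).
have sMT : Nphi T X P chi \subset T by apply/subsetP=> x /NphiP[/setIP[]].
have HX : X \in H by apply: (Hconj HP); apply: (fconj_sym ES); apply/fconjP; exists chi.
have Xg : E X g by apply: (fs_ext ES Xchi) => z Xz; rewrite gchi.
have gX : g @: X = P by rewrite (eq_in_imset gchi).
have := Hi HX (Phat := Nphi_group T X P chi) (f := g) (Nphi_self ES Xchi echi) sMT.
rewrite /fhom MEg (Nphi_ext_in_T (EF Xchi) echi Mg gchi) Xg gX sPT.
by case/(_ isT isT)/andP=> Eg _; exists g.
Qed.

(* Receptivity extends an automorphism of P normalizing Aut_T(P) to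
   N_T(P); its p-part is a p-element of Aut_E(N_T(P)) still inducing it. *)
Lemma norm_ext (al : {perm gT}) : al \in AutF E P -> al \in 'N(AutR T P) ->
  p.-elt al -> exists2 be, be \in AutF E 'N_T(P) & p.-elt be /\ {in P, be =1 al}.
Proof.
move=> /[dup] /setIdP[Aal Fal] EPal nAal pal.
have sPN : P \subset 'N_T(P) by rewrite subsetI sPT normG.
have efa : [ffun x => al x] @: P = P by rewrite Aut_ffun_im.
have sNphi : 'N_T(P) \subset Nphi T P P [ffun x => al x].
  apply: AutR_Nphi => b Ab; have : b ^ al \in AutR T P by rewrite memJ_norm.
  case/imsetP=> y NTy ey; exists y => // z Pz.
  have Ny : y \in 'N(P) by case/setIP: NTy.
  rewrite !ffunE -(norm_conj_autE Ny (Aut_closed Aal Pz)) -ey.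
  by rewrite conjgE !permM permK.
have [ab [Mab abfa]] := receptive_E Fal efa.
have Nab : E 'N_T(P) ab := fs_restr ES (P := Nphi_group T P P _) Mab sNphi.
have abP : ab @: P = P by rewrite (eq_in_imset abfa).
have abN : ab @: 'N_T(P) \subset 'N_T(P).
  apply/subsetP=> _ /imsetP[y Ny ->]; rewrite inE (fs_mem ES Nab Ny) /=.
  by rewrite -[in X in _ \in X]abP; apply: (fs_norm_im ES Nab) => //; case/setIP: Ny.
have [ap APap apab] := fs_stable_Aut ES Nab abN.
have apP z : z \in P -> ap z = al z.
  by move=> Pz; rewrite apab ?(subsetP sPN) // abfa // ffunE.
have sNT : 'N_T(P) \subset T := subsetIl _ _.
exists ap.`_p; last by split; [exact: p_elt_constt | exact: constt_agree].
by rewrite (groupX _ (APap : ap \in Group (AutF_group_set ES sNT))).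
Qed.

End FullyNormalizedOrCentralized.

Lemma fn_or_fc_properties P : P \in H ->
  fully_normalized E T P \/ fully_centralized E T P ->
  [/\ receptive E T P, fully_centralized E T P,
      receptive F S P & fully_centralized F S P].
Proof.
move=> HP fnc; split.
- exact: receptive_E HP fnc.
- exact: fully_centralized_E HP fnc.
- exact: receptive_F HP fnc.
- exact: fully_centralized_F HP fnc.
Qed.

Section Automization.
Hypotheses
  (Hover : forall P Q : {group gT}, P \in H -> P \subset Q -> Q \subset T -> Q \in H)
  (iii : p.-Sylow(AutF E T) (AutR T T)).

(* Fully normalized members of H are fully automized, by induction on
   |T| - |P|: a p-element of N_{Aut_E(P)}(Aut_T(P)) outside Aut_T(P) would
   extend to N_T(P) and then be conjugation by an element of N_T(P). *)
Lemma fully_automized_of_fn P : P \in H -> fully_normalized E T P ->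
  fully_automized p E T P.
Proof.
have pT : p.-group T := pgroupS sTS pS.
have [n] := ubnP (#|T| - #|P|); elim: n P => // n IH P ltTP HP fnP.
have sPT := HT HP.
have [ePT | prPT] := eqVproper sPT; first by rewrite (val_inj ePT); exact: iii.
have prPN : P \proper 'N_T(P) := nilpotent_proper_norm (pgroup_nil pT) prPT.
have sNT : 'N_T(P) \subset T := subsetIl _ _.
have [N' cNN' fnN'] := fully_normalized_conj ES sNT.
have HN' : N' \in H := Hconj (Hover HP (proper_sub prPN) sNT) cNN'.
have faN' : fully_automized p E T N'.
  apply: IH HN' fnN'; have /fconjP[chi [Nchi <-]] := cNN'.
  rewrite (fs_card ES Nchi) -ltnS; apply: leq_trans ltTP.
  by rewrite ltnS ltn_sub2l ?proper_card // (leq_trans (proper_card prPN)) ?subset_leq_card.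
apply/idPn; rewrite /fully_automized AutR_morphim => nsyl.
have sAG : conj_aut P @* 'N_T(P) \subset Group (AutF_group_set ES sPT).
  by rewrite /= -AutR_morphim (AutR_sub ES (subxx T) sPT).
have pA : p.-group (conj_aut P @* 'N_T(P)) by apply/morphim_pgroup/(pgroupS sNT).
have [al /setIP[EPal nAal] /andP[notAal pal]] := not_Sylow_norm_elt sAG pA nsyl.
have {}nAal : al \in 'N(AutR T P) by rewrite AutR_morphim.
have [be EBbe [pbe beal]] := norm_ext HP (or_introl fnP) EPal nAal pal.
have /setIdP[Aal _] := EPal.
have beP : be @: P \subset P.
  by rewrite -{2}(Aut_im Aal); apply/subsetP=> _ /imsetP[z Pz ->]; rewrite beal ?imset_f.
have [n0 Nn0 ben0] := norm_ext_conj ES sPT fnP cNN' faN' EBbe pbe beP.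
case/negP: notAal; suff -> : al = conj_aut P n0 by rewrite mem_morphim //; case/setIP: Nn0.
apply: (eq_Aut Aal (Aut_aut _ _)) => z Pz.
by rewrite -beal // ben0 // norm_conj_autE //; case/setIP: Nn0.
Qed.

(* Part 2: every member of H has a fully normalized E-conjugate in H, which is
   fully automized and receptive. *)
Lemma H_saturated_E : H_saturated p E T H.
Proof.
move=> P HP; have [P' cPP' fnP'] := fully_normalized_conj ES (HT HP).
have HP' : P' \in H := Hconj HP cPP'.
exists P'; split=> //; first exact: fully_automized_of_fn.
exact: receptive_E HP' (or_introl fnP').
Qed.

End Automization.

End Lemma1p10.

Theorem lemma1p10 (gT : finGroupType) (p : nat) (S T : {group gT})
    (F E : fus_pred gT) (H : {set {group gT}}) :
  prime p -> p.-group S ->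
  is_fusion_system S F -> saturated p F S ->
  fusion_subsystem S T F E ->
  H != set0 ->
  (forall P : {group gT}, P \in H -> P \subset T) ->
  (forall P Q : {group gT}, P \in H -> fconj E P Q -> Q \in H) ->
  (forall P Q : {group gT}, P \in H -> P \subset Q -> Q \subset T -> Q \in H) ->
  (* (i) *)
  (forall P : {group gT}, P \in H ->
     forall (Phat : {group gT}) (f : {ffun gT -> gT}),
       P \subset Phat -> Phat \subset T ->
       fhom F Phat T f -> fhom E P T f -> fhom E Phat T f) ->
  (* (ii) *)
  (forall P : {group gT}, P \in H ->
     forall f : {ffun gT -> gT}, fhom F 'N_T(P) S f ->
       exists R : {group gT},
         [/\ R \subset S, <<(f @: 'N_T(P)) :|: 'C_S(f @: P)>> \subset R &
             exists g : {ffun gT -> gT},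
               fhom F R T g /\ fhom E 'N_T(P) T [ffun x => g (f x)]]) ->
  (forall P : {group gT}, P \in H ->
     fully_normalized E T P \/ fully_centralized E T P ->
     [/\ receptive E T P, fully_centralized E T P,
         receptive F S P & fully_centralized F S P])
  /\
  ((* (iii) *) p.-Sylow(AutF E T) (AutR T T) -> H_saturated p E T H).
Proof.
move=> _ pS FS satF [sTS ES EF] _ HT Hconj Hover Hi Hii; split.
  exact: (fn_or_fc_properties pS FS satF sTS ES EF HT Hconj Hi Hii).
exact: (H_saturated_E pS FS satF sTS ES EF HT Hconj Hi Hii Hover).
Qed.
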